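(* Let $\Omega$ be a nonempty set, $\succeq$ a regular stochastic order on $\mathfrak F(\Omega)$ and $\Gamma\subset\mathfrak F(\Omega)$ a convex cone. There is no $f\in\Gamma$ with $f\succeq1$ if and only if there exists $m\in\mathbb P_\succeq=\{\mu\in\mathbb P:\mu(N)=0\text{ whenever }0\succeq1_N\}$ such that $$\Gamma_\succeq=\{f\in\Gamma:f\succeq a\text{ for some }a\in\mathbb R\}\subset L^1(m)\quad\text{and}\quad\sup_{f\in\Gamma_\succeq}\int f\,dm\le0 .$$
   Context: $\mathfrak F(\Omega)$ is the set of real-valued functions on $\Omega$; inequalities are pointwise and constants are constant functions. A regular stochastic order is a reflexive, transitive binary relation $\succeq$ on $\mathfrak F(\Omega)$ such that: (TRIV) $0\not\succeq1$; (CONE) $f_i\succeq g_i$ and $a_i\ge0$ ($i=1,2$) imply $a_1f_1+a_2f_2\succeq a_1g_1+a_2g_2$; (CERT) $f\ge0$ implies $f\succeq0$; (APPR) $f+2^{-n}\succeq0$ for all $n$ implies $f\succeq0$; (REST) $f\succeq0$, $A\subset\Omega$ imply $f1_A\succeq0$. $\mathbb P$ is the set of finitely additive probabilities on all subsets of $\Omega$. For $\mu$ bounded finitely additive, $\int f\,d\mu:=\lim_n\int[(f^+\wedge n)-(f^-\wedge n)]d\mu$ if the limit exists in $[-\infty,\infty]$, else $\infty$; $L^1(m)$ denotes the $m$-integrable functions (Dunford–Schwartz). *)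

From HB Require Import structures.
From mathcomp Require Import all_boot all_order all_algebra.
From mathcomp Require Import all_classical all_reals all_analysis.
Set Implicit Arguments. Unset Strict Implicit. Unset Printing Implicit Defensive.
Import Order.TTheory GRing.Theory Num.Theory.
Import numFieldNormedType.Exports.
Local Open Scope classical_set_scope.
Local Open Scope ring_scope.

Section Defs.
Variables (R : realType) (Omega : Type).

Definition regular_stochastic_order (ge : (Omega -> R) -> (Omega -> R) -> Prop) :=
  [/\ (forall f, ge f f),
      (forall f g h, ge f g -> ge g h -> ge f h),
      ~ ge (cst 0) (cst 1) &
   [/\
      (forall f1 f2 g1 g2 (a1 a2 : R), ge f1 g1 -> ge f2 g2 ->
          0 <= a1 -> 0 <= a2 ->
          ge (fun x => a1 * f1 x + a2 * f2 x) (fun x => a1 * g1 x + a2 * g2 x)),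
      (forall f, (forall x, 0 <= f x) -> ge f (cst 0)),
      (forall f, (forall n : nat, ge (fun x => f x + 2%:R ^- n) (cst 0)) ->
          ge f (cst 0)) &
      (forall f (A : set Omega), ge f (cst 0) -> ge (f \* \1_A) (cst 0))]].

Definition convex_cone (G : set (Omega -> R)) :=
  forall f g (a b : R), G f -> G g -> 0 <= a -> 0 <= b ->
    G (fun x => a * f x + b * g x).

Definition fa_probability (mu : set Omega -> R) :=
  [/\ mu setT = 1, (forall A, 0 <= mu A) &
      (forall A B, A `&` B = set0 -> mu (A `|` B) = mu A + mu B)].

(* Integral of a bounded function w.r.t. a finitely additive probability on the
   power set: supremum of integrals of simple functions sum_i a_i 1_{A_i} below f. *)
Definition bint (mu : set Omega -> R) (f : Omega -> R) : R :=
  sup [set r | exists (n : nat) (a : 'I_n -> R) (A : 'I_n -> set Omega),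
        (forall x, \sum_(i < n) a i * \1_(A i) x <= f x) /\
        r = \sum_(i < n) a i * mu (A i)].

Definition fa_integral (mu : set Omega -> R) (f : Omega -> R) : \bar R :=
  let u := fun n : nat =>
    (bint mu (fun x => Num.min (Num.max (f x) 0) n%:R
                       - Num.min (Num.max (- f x) 0) n%:R))%:E in
  if `[< cvgn u >] then limn u else +oo%E.

(* simple functions: finitely many values (all subsets are measurable) *)
Definition simple_fun (f : Omega -> R) := exists s : seq R, forall x, f x \in s.

Definition DS_integrable (mu : set Omega -> R) (f : Omega -> R) :=
  exists s : nat -> Omega -> R,
    [/\ (forall n, simple_fun (s n)),
        (forall eps : R, 0 < eps ->
           (fun n => mu [set x | eps < `|s n x - f x|]) @ \oo --> (0 : R)) &
        (forall eps : R, 0 < eps -> exists N : nat, forall n k : nat,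
           (N <= n)%N -> (N <= k)%N -> bint mu (fun x => `|s n x - s k x|) <= eps)].

Definition P_order (ge : (Omega -> R) -> (Omega -> R) -> Prop) (mu : set Omega -> R) :=
  fa_probability mu /\ forall N : set Omega, ge (cst 0) \1_N -> mu N = 0.

Definition Gamma_order (ge : (Omega -> R) -> (Omega -> R) -> Prop) (G : set (Omega -> R)) :=
  [set f | G f /\ exists a : R, ge f (cst a)].

End Defs.

(* Necessity: if [f] is in [G] and [f >= 1], then [{f < 1/2}] is null for the
   order, so under any [m] in [P_order] every truncation of [f] has integral at
   least [1/2], hence so has [f].

   Sufficiency: [p h = inf {t | t + g >= h for some g in G or g = 0}] is
   sublinear on bounded functions, and [p h >= inf h] precisely because no
   element of [G] dominates [1].  A Hahn-Banach extension [phi <= p] of the zero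
   functional is then positive with [phi 1 = 1], so [m A = phi 1_A] lies in
   [P_order] and integrates bounded functions to their [phi]-value.  For [f] in
   [G] with [f >= a], the clipped functions [max (min f n) (a - 1)] agree with
   the truncations of [f] off the null set [{f < a - 1}], are dominated by [f]
   (so have [phi]-value [<= 0]) and increase with [n]; their values give
   [int f dm <= 0], and their discretisations witness Dunford-Schwartz
   integrability. *)

From HB Require Import structures.
From mathcomp Require Import all_boot all_order all_algebra.
From mathcomp Require Import all_classical all_reals all_analysis.
From mathcomp Require Import ring lra zify.
Import Order.TTheory GRing.Theory Num.Theory.
Import numFieldNormedType.Exports.
Local Open Scope classical_set_scope.
Local Open Scope ring_scope.

Section StochasticOrder.
Context {R : realType} {Omega : Type} {ge : (Omega -> R) -> (Omega -> R) -> Prop}.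
Hypothesis Hge : regular_stochastic_order ge.

Lemma rso_refl f : ge f f. Proof. by case: Hge. Qed.

Lemma rso_trans {f g h} : ge f g -> ge g h -> ge f h.
Proof. by case: Hge => _ T _ _; apply: T. Qed.

Lemma rso_triv : ~ ge (cst 0) (cst 1). Proof. by case: Hge. Qed.

Lemma rso_ext {f g f' g'} : ge f g -> f =1 f' -> g =1 g' -> ge f' g'.
Proof. by move=> H /funext <- /funext <-. Qed.

Lemma rso_cone {f1 f2 g1 g2} {a1 a2 : R} : ge f1 g1 -> ge f2 g2 ->
  0 <= a1 -> 0 <= a2 ->
  ge (fun x => a1 * f1 x + a2 * f2 x) (fun x => a1 * g1 x + a2 * g2 x).
Proof. by case: Hge => _ _ _ [C _ _ _]; apply: C. Qed.

Lemma rso_add {f1 f2 g1 g2} : ge f1 g1 -> ge f2 g2 ->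
  ge (fun x => f1 x + f2 x) (fun x => g1 x + g2 x).
Proof.
move=> H1 H2; apply: rso_ext (rso_cone H1 H2 ler01 ler01) _ _ => x; by rewrite !mul1r.
Qed.

Lemma rso_scale {a : R} {f g} : 0 <= a -> ge f g ->
  ge (fun x => a * f x) (fun x => a * g x).
Proof.
move=> a0 H; apply: rso_ext (rso_cone H H a0 (lexx 0)) _ _ => x; by rewrite mul0r addr0.
Qed.

Lemma rso_cert {f} : (forall x, 0 <= f x) -> ge f (cst 0).
Proof. by case: Hge => _ _ _ [_ C _ _]; apply: C. Qed.

Lemma rso_rest {f} (A : set Omega) : ge f (cst 0) -> ge (f \* \1_A) (cst 0).
Proof. by case: Hge => _ _ _ [_ _ _ C]; apply: C. Qed.

Lemma rso_sub0 {f g} : ge f g -> ge (fun x => f x - g x) (cst 0).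
Proof.
move=> H; apply: rso_ext (rso_add H (rso_refl (fun x => - g x))) _ _ => x //=.
exact: subrr.
Qed.

Lemma rso_from_sub0 {f g} : ge (fun x => f x - g x) (cst 0) -> ge f g.
Proof.
move=> H; apply: rso_ext (rso_add H (rso_refl g)) _ _ => x /=; [exact: subrK|exact: add0r].
Qed.

Lemma rso_le {f g} : (forall x, g x <= f x) -> ge f g.
Proof. by move=> H; apply: rso_from_sub0; apply: rso_cert => x; rewrite subr_ge0. Qed.

(* Restricting [f - a >= 0] to [N] and comparing pointwise gives [- e 1_N >= 0]. *)
Lemma rso_null_below f (a e : R) : ge f (cst a) -> 0 < e ->
  ge (cst 0) \1_[set x | f x < a - e].
Proof.
move=> fa e0; set N := [set x | f x < a - e].
have restr := rso_rest N (rso_sub0 fa).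
have below : ge (fun x => - e * \1_N x) ((fun x => f x - cst a x) \* \1_N).
  apply: rso_le => x /=; rewrite !indicE.
  case: (boolP (x \in N)) => [|_] /=; rewrite ?mulr1 ?mulr0 //.
  by rewrite inE /N /= => fx; lra.
have ei : 0 <= e^-1 by rewrite invr_ge0 ltW.
have neg := rso_scale ei (rso_trans below restr).
apply: rso_from_sub0; apply: rso_ext neg _ _ => x /=.
  by rewrite mulrA mulrN mulVf ?gt_eqF // mulN1r sub0r.
by rewrite mulr0.
Qed.

End StochasticOrder.

Definition lower_sums {R : realType} {Omega : Type} (m : set Omega -> R)
    (h : Omega -> R) :=
  [set r | exists (n : nat) (a : 'I_n -> R) (A : 'I_n -> set Omega),
     (forall x, \sum_(i < n) a i * \1_(A i) x <= h x) /\
     r = \sum_(i < n) a i * m (A i)].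

Section FinitelyAdditive.
Context {R : realType} {Omega : Type} {m : set Omega -> R}.
Hypothesis Hm : fa_probability m.

Lemma fa_setT : m setT = 1. Proof. by case: Hm. Qed.

Lemma fa_ge0 A : 0 <= m A. Proof. by case: Hm. Qed.

Lemma fa_add A B : A `&` B = set0 -> m (A `|` B) = m A + m B.
Proof. by case: Hm => _ _; apply. Qed.

Lemma fa_split A C : m A = m (A `&` C) + m (A `&` ~` C).
Proof.
rewrite -fa_add; first by rewrite -setIUr setUCr setIT.
by rewrite setIACA setIid setICr setI0.
Qed.

Lemma fa_set0 : m set0 = 0.
Proof. by have := fa_split set0 set0; rewrite !set0I; lra. Qed.

Lemma fa_le A B : A `<=` B -> m A <= m B.
Proof. by move=> AB; rewrite (fa_split B A) setIidr // lerDl fa_ge0. Qed.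

Lemma fa_subadd A B : m (A `|` B) <= m A + m B.
Proof.
rewrite (fa_split _ A) setUK setIUl setICr set0U lerD2l.
by apply: fa_le => x [].
Qed.

(* The constant [d] and the restriction to [E] make the statement inductive:
   split [E] along the last set and absorb its coefficient into [d]. *)
Lemma fa_sum_indic_ge0 n : forall (c : 'I_n -> R) (C : 'I_n -> set Omega) (d : R)
  (E : set Omega),
  (forall x, E x -> 0 <= \sum_(i < n) c i * \1_(C i) x + d) ->
  0 <= \sum_(i < n) c i * m (C i `&` E) + d * m E.
Proof.
elim: n => [|n IH] c C d E H.
  rewrite big_ord0 add0r.
  have [->|/set0P[x Ex]] := eqVneq E set0; first by rewrite fa_set0 mulr0.
  by have := H x Ex; rewrite big_ord0 add0r => d0; rewrite mulr_ge0 // fa_ge0.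
set c' := fun i : 'I_n => c (widen_ord (leqnSn n) i).
set C' := fun i : 'I_n => C (widen_ord (leqnSn n) i).
set Cm := C ord_max.
have inC : 0 <= \sum_(i < n) c' i * m (C' i `&` (E `&` Cm))
                + (d + c ord_max) * m (E `&` Cm).
  apply: IH => x [Ex Cx]; have := H x Ex; rewrite big_ord_recr /=.
  by rewrite indicE mem_set // mulr1 /c' /C'; lra.
have outC : 0 <= \sum_(i < n) c' i * m (C' i `&` (E `&` ~` Cm)) + d * m (E `&` ~` Cm).
  apply: IH => x [Ex Cx]; have := H x Ex; rewrite big_ord_recr /=.
  by rewrite indicE memNset // mulr0 addr0 /c' /C'; lra.
rewrite big_ord_recr /= (eq_bigr (fun i => c' i * m (C' i `&` (E `&` Cm))
                                  + c' i * m (C' i `&` (E `&` ~` Cm)))); last first.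
  by move=> i _; rewrite -mulrDr !setIA -fa_split.
rewrite big_split /= (fa_split E Cm) [C ord_max `&` E]setIC -/Cm.
lra.
Qed.

Lemma lower_sums_ub h B : (forall x, h x <= B) -> ubound (lower_sums m h) B.
Proof.
move=> hB r [n [a [A [Hs ->]]]].
have := @fa_sum_indic_ge0 n (fun i => - a i) A B setT.
rewrite fa_setT mulr1; under eq_bigr do rewrite setIT mulNr.
rewrite sumrN => H; rewrite -subr_ge0 addrC; apply: H => x _.
under eq_bigr do rewrite mulNr.
by rewrite sumrN addrC subr_ge0; exact: le_trans (Hs x) (hB x).
Qed.

Lemma bint_ge_sum h B n (a : 'I_n -> R) (A : 'I_n -> set Omega) :
  (forall x, h x <= B) -> (forall x, \sum_(i < n) a i * \1_(A i) x <= h x) ->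
  \sum_(i < n) a i * m (A i) <= bint m h.
Proof.
move=> hB Hs; apply: sup_upper_bound; last by exists n, a, A.
split; first by exists (\sum_(i < n) a i * m (A i)), n, a, A.
by exists B; apply: lower_sums_ub.
Qed.

End FinitelyAdditive.

Definition truncate {R : realType} (k y : R) :=
  Num.min (Num.max y 0) k - Num.min (Num.max (- y) 0) k.

Section Truncation.
Context {R : realType}.
Implicit Types k y : R.

Lemma truncate_ub k y : 0 <= k -> truncate k y <= k.
Proof.
move=> k0; rewrite /truncate.
have : Num.min (Num.max y 0) k <= k by rewrite ge_min lexx orbT.
have : 0 <= Num.min (Num.max (- y) 0) k by rewrite le_min k0 le_max lexx orbT.
lra.
Qed.

Lemma truncate_lb k y : 0 <= k -> - k <= truncate k y.
Proof.
move=> k0; rewrite /truncate.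
have : Num.min (Num.max (- y) 0) k <= k by rewrite ge_min lexx orbT.
have : 0 <= Num.min (Num.max y 0) k by rewrite le_min k0 le_max lexx orbT.
lra.
Qed.

Lemma truncate_min k y : 0 <= k -> - k <= y -> truncate k y = Num.min y k.
Proof.
move=> k0 yk; rewrite /truncate; case: (boolP (0 <= y)) => [y0|]; last rewrite -ltNge => y0.
  by rewrite (max_l y0) (max_r (_ : - y <= 0)) ?(min_l k0) ?subr0 //; lra.
rewrite (max_r (ltW y0)) (max_l (_ : 0 <= - y)) ?(min_l k0) ?(min_l (_ : - y <= k))
  ?(min_l (_ : y <= k)); lra.
Qed.

End Truncation.

Section LowerBound.
Context {R : realType} {Omega : Type} {ge : (Omega -> R) -> (Omega -> R) -> Prop}.
Hypothesis Hge : regular_stochastic_order ge.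
Context {m : set Omega -> R} {f : Omega -> R}.
Hypothesis Hm : P_order ge m.
Hypothesis f1 : ge f (cst 1).

(* [1/2 - (k + 1/2) 1_N] lies below [truncate k f], where [N = {f < 1/2}] is null. *)
Lemma bint_truncate_ge_half k : (1 <= k)%N -> 1/2 <= bint m (fun x => truncate k%:R (f x)).
Proof.
move=> k1; have [mP mnull] := Hm; set N := [set x | f x < 1 - 1/2].
have mN : m N = 0 by apply: mnull; apply: (rso_null_below Hge _ _ _ f1); lra.
have k1' : (1 : R) <= k%:R by rewrite ler1n.
pose a (i : 'I_2) : R := if val i == 0%N then 1/2 else - (k%:R + 1/2).
pose A (i : 'I_2) : set Omega := if val i == 0%N then setT else N.
have below x : \sum_(i < 2) a i * \1_(A i) x <= truncate k%:R (f x).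
  rewrite !big_ord_recr big_ord0 /= /a /A /= !indicE mem_set //.
  have := truncate_lb k%:R (f x) (ler0n R k).
  case: (boolP (x \in N)) => [_|/negP xN] /=; rewrite ?mulr1n ?mulr0n; first lra.
  have fx : 1/2 <= f x.
    by rewrite leNgt; apply/negP => fx; apply: xN; apply/mem_set; change (f x < 1 - 1/2); lra.
  rewrite truncate_min; [|lra|lra].
  have : 1/2 <= Num.min (f x) k%:R by rewrite le_min; apply/andP; split; lra.
  lra.
have := bint_ge_sum mP _ _ _ _ _ (fun x => truncate_ub k%:R (f x) (ler0n R k)) below.
by rewrite !big_ord_recr big_ord0 /= /a /A /= (fa_setT mP) mN add0r mulr1 mulr0 addr0.
Qed.

Lemma fa_integral_ge_half : ((1/2)%:E <= fa_integral m f)%E.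
Proof.
rewrite /fa_integral /=; case: ifPn => [/asboolP cv|_]; last exact: leey.
apply: lime_ge => //; exists 1%N => // n /= n1; rewrite lee_fin.
exact: bint_truncate_ge_half.
Qed.

End LowerBound.

Definition is_bounded {R : realType} {Omega : Type} (h : Omega -> R) :=
  exists M : R, forall x, `|h x| <= M.

Section Bounded.
Context {R : realType} {Omega : Type}.
Implicit Types (f g h : Omega -> R) (al be : R).

Lemma is_bounded_ext {f g} : is_bounded f -> f =1 g -> is_bounded g.
Proof. by move=> H /funext <-. Qed.

Lemma is_bounded_comb al be {f g} : is_bounded f -> is_bounded g ->
  is_bounded (fun x => al * f x + be * g x).
Proof.
move=> [M hM] [N hN]; exists (`|al| * M + `|be| * N) => x.
apply: le_trans (ler_normD _ _) _; rewrite !normrM.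
by apply: lerD; apply: ler_wpM2l.
Qed.

Lemma is_boundedD {f g} : is_bounded f -> is_bounded g -> is_bounded (fun x => f x + g x).
Proof.
by move=> bf bg; apply: is_bounded_ext (is_bounded_comb 1 1 bf bg) _ => x; rewrite !mul1r.
Qed.

Lemma is_boundedB {f g} : is_bounded f -> is_bounded g -> is_bounded (fun x => f x - g x).
Proof.
move=> bf bg; apply: is_bounded_ext (is_bounded_comb 1 (-1) bf bg) _ => x.
by rewrite mul1r mulN1r.
Qed.

Lemma is_boundedZ al {f} : is_bounded f -> is_bounded (fun x => al * f x).
Proof.
by move=> bf; apply: is_bounded_ext (is_bounded_comb al 0 bf bf) _ => x; rewrite mul0r addr0.
Qed.

Lemma is_bounded_cst (c : R) : is_bounded (fun _ : Omega => c).
Proof. by exists `|c|. Qed.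

Lemma is_bounded_norm {h} : is_bounded h -> is_bounded (fun x => `|h x|).
Proof. by move=> [M hM]; exists M => x; rewrite normr_id. Qed.

Lemma is_bounded_between {h} (lo hi : R) :
  (forall x, lo <= h x <= hi) -> is_bounded h.
Proof.
move=> H; exists (`|lo| + `|hi|) => x; have /andP[h1 h2] := H x.
rewrite ler_norml; apply/andP; split.
  by have := ler_norm (- lo); rewrite normrN; have := normr_ge0 hi; lra.
by have := ler_norm hi; have := normr_ge0 lo; lra.
Qed.

Lemma is_bounded_indic (A : set Omega) : is_bounded (\1_A : Omega -> R).
Proof.
by apply: (is_bounded_between 0 1) => x; rewrite indicE ler0n lern1 leq_b1.
Qed.

Lemma is_bounded_sum_indic {n} (a : 'I_n -> R) (A : 'I_n -> set Omega) :
  is_bounded (fun x => \sum_(i < n) a i * \1_(A i) x).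
Proof.
elim: n a A => [|n IH] a A.
  by apply: is_bounded_ext (is_bounded_cst 0) _ => x; rewrite big_ord0.
have := is_boundedD (IH (fun i => a (widen_ord (leqnSn n) i))
  (fun i => A (widen_ord (leqnSn n) i))) (is_boundedZ (a ord_max) (is_bounded_indic (A ord_max))).
by move/is_bounded_ext; apply => x; rewrite big_ord_recr.
Qed.

End Bounded.

Definition cone0 {R : realType} {Omega : Type} (G : set (Omega -> R)) :=
  G `|` [set cst 0].

Lemma convex_cone0 {R : realType} {Omega : Type} {G : set (Omega -> R)} :
  convex_cone G -> convex_cone (cone0 G).
Proof.
move=> HG f g a b [Gf|->] [Gg|->] a0 b0.
- by left; apply: HG.
- left; have -> : (fun x => a * f x + b * cst 0 x) = (fun x => a * f x + 0 * f x).
    by apply/funext => x /=; rewrite mulr0 mul0r.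
  exact: HG.
- left; have -> : (fun x => a * cst 0 x + b * g x) = (fun x => b * g x + 0 * g x).
    by apply/funext => x /=; rewrite mulr0 mul0r add0r addr0.
  exact: HG.
- by right; apply/funext => x /=; rewrite !mulr0 addr0.
Qed.

(* [dominated ge G t h] says that [t] is an upper bound for the sublinear
   functional [p h = inf {t | t + g >= h for some g in G or g = 0}]. *)
Definition dominated {R : realType} {Omega : Type}
    (ge : (Omega -> R) -> (Omega -> R) -> Prop) (G : set (Omega -> R))
    (t : R) (h : Omega -> R) :=
  exists2 g, cone0 G g & ge (fun x => t + g x) h.

Section Domination.
Context {R : realType} {Omega : Type} {ge : (Omega -> R) -> (Omega -> R) -> Prop}
  {G : set (Omega -> R)}.
Hypothesis Hge : regular_stochastic_order ge.
Local Notation dominated := (dominated ge G).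

Lemma dominated_ext {t h h'} : dominated t h -> h =1 h' -> dominated t h'.
Proof. by move=> H /funext <-. Qed.

Lemma dominated_le t h : (forall x, h x <= t) -> dominated t h.
Proof. by move=> H; exists (cst 0); [right|apply: (rso_le Hge) => x; rewrite addr0]. Qed.

Hypothesis HG : convex_cone G.

Lemma dominated_add {s t h1 h2} : dominated s h1 -> dominated t h2 ->
  dominated (s + t) (fun x => h1 x + h2 x).
Proof.
move=> [g1 G1 H1] [g2 G2 H2]; exists (fun x => 1 * g1 x + 1 * g2 x).
  exact: convex_cone0.
by apply: rso_ext (rso_add Hge H1 H2) _ _ => x //; rewrite !mul1r; lra.
Qed.

Lemma dominated_scale {l t h} : 0 <= l -> dominated t h ->
  dominated (l * t) (fun x => l * h x).
Proof.
move=> l0 [g G1 H1]; exists (fun x => l * g x + 0 * g x); first exact: convex_cone0.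
by apply: rso_ext (rso_scale Hge l0 H1) _ _ => x //; rewrite mul0r addr0 mulrDr.
Qed.

Hypothesis Hno : ~ exists f, G f /\ ge f (cst 1).

(* If [t < c <= h <= t + g], then a positive multiple of [g] dominates [1]. *)
Lemma dominated_lb {t h} {c : R} : dominated t h -> (forall x, c <= h x) -> c <= t.
Proof.
move=> [g G1 H1] hc; rewrite leNgt; apply/negP => tc.
have gc : ge g (cst (c - t)).
  apply: (rso_from_sub0 Hge).
  have := rso_sub0 Hge (rso_trans Hge H1 (rso_le Hge hc)).
  by move/rso_ext; apply => x //=; lra.
have l0 : 0 <= (c - t)^-1 by rewrite invr_ge0 subr_ge0 ltW.
have g1 : ge (fun x => (c - t)^-1 * g x + 0 * g x) (cst 1).
  apply: rso_ext (rso_scale Hge l0 gc) _ _ => x //=; first by rewrite mul0r addr0.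
  by rewrite mulVf // gt_eqF // subr_gt0.
have [Gl|Gl] := convex_cone0 HG _ _ _ _ G1 G1 l0 (lexx 0).
  by apply: Hno; exists (fun x => (c - t)^-1 * g x + 0 * g x).
have g0 : (fun x => (c - t)^-1 * g x + 0 * g x) = cst 0 := Gl.
exact: rso_triv Hge (rso_ext g1 (fun x => congr1 (fun k => k x) g0) (fun x => erefl)).
Qed.

End Domination.

Section HahnBanach.
Context {R : realType} {Omega : Type} {ge : (Omega -> R) -> (Omega -> R) -> Prop}
  {G : set (Omega -> R)}.
Hypothesis Hge : regular_stochastic_order ge.
Hypothesis HG : convex_cone G.
Hypothesis Hno : ~ exists f, G f /\ ge f (cst 1).
Local Notation dominated := (dominated ge G).

(* A linear functional below [p] on a space of bounded functions, encoded by its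
   graph so that chains are joined by union. *)
Definition dominated_graph (Gr : set ((Omega -> R) * R)) :=
  [/\ (forall x a b, Gr (x, a) -> Gr (x, b) -> a = b),
      (forall x y a b (al be : R), Gr (x, a) -> Gr (y, b) ->
          Gr ((fun z => al * x z + be * y z), al * a + be * b)),
      (forall x a, Gr (x, a) -> is_bounded x) &
      (forall x a t, Gr (x, a) -> dominated t x -> a <= t)].

Lemma dominated_graph_bigcup (F : set (set ((Omega -> R) * R))) :
  F `<=` dominated_graph -> total_on F subset -> dominated_graph (\bigcup_(X in F) X).
Proof.
move=> FD Ftot; split.
- move=> x a b [X FX Xa] [Y FY Yb].
  have [XY|YX] := Ftot _ _ FX FY.
    by case: (FD _ FY) => GrF _ _ _; exact: GrF x a b (XY _ Xa) Yb.
  by case: (FD _ FX) => GrF _ _ _; exact: GrF x a b Xa (YX _ Yb).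
- move=> x y a b al be [X FX Xa] [Y FY Yb].
  have [XY|YX] := Ftot _ _ FX FY.
    by exists Y => //; case: (FD _ FY) => _ GrL _ _; exact: GrL _ _ _ _ _ _ (XY _ Xa) Yb.
  by exists X => //; case: (FD _ FX) => _ GrL _ _; exact: GrL _ _ _ _ _ _ Xa (YX _ Yb).
- by move=> x a [X FX Xa]; case: (FD _ FX) => _ _ GrB _; exact: GrB Xa.
- by move=> x a t [X FX Xa]; case: (FD _ FX) => _ _ _ GrLe; exact: GrLe.
Qed.

Lemma dominated_graph0 : dominated_graph [set (cst 0, 0)].
Proof.
split.
- by move=> x a b [_ ->] [_ ->].
- move=> x y a b al be [-> ->] [-> ->]; congr pair; last by rewrite !mulr0 addr0.
  by apply/funext => z /=; rewrite !mulr0 addr0.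
- by move=> x a [-> _]; apply: is_bounded_cst.
- move=> x a t [-> ->] H; apply: (dominated_lb Hge HG Hno H) => z.
  exact: lexx.
Qed.

Section OneStepExtension.
Context {Gr : set ((Omega -> R) * R)}.
Hypothesis GrD : dominated_graph Gr.
Hypothesis Gr0 : Gr (cst 0, 0).
Context {h0 : Omega -> R} {M : R}.
Hypothesis h0M : forall z, `|h0 z| <= M.

(* Both families of bounds reduce to [a + b <= t + t'], i.e. to domination of
   the graph at [x + y]; the gap between them is then filled by a supremum. *)
Lemma extension_gap : exists c,
  (forall x a t, Gr (x, a) -> dominated t (fun z => x z - h0 z) -> a - t <= c) /\
  (forall y b t, Gr (y, b) -> dominated t (fun z => y z + h0 z) -> c <= t - b).
Proof.
case: GrD => _ GrL _ GrLe.
have h0b z : - M <= h0 z <= M by rewrite -ler_norml.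
set L := [set r | exists x a t,
  [/\ Gr (x, a), dominated t (fun z => x z - h0 z) & r = a - t]].
have ub y b t : Gr (y, b) -> dominated t (fun z => y z + h0 z) -> ubound L (t - b).
  move=> Gy dy _ [x [a [t' [Gx dx ->]]]].
  have dxy : dominated (t' + t) (fun z => 1 * x z + 1 * y z).
    by apply: dominated_ext (dominated_add Hge HG dx dy) _ => z; rewrite !mul1r; lra.
  by have := GrLe _ _ _ (GrL x y a b 1 1 Gx Gy) dxy; rewrite !mul1r; lra.
have supL : has_sup L.
  split; first by exists (0 - M), (cst 0), 0, M; split => //;
    apply: (dominated_le Hge) => z /=; have := h0b z; lra.
  exists (M - 0); apply: ub Gr0 _.
  by apply: (dominated_le Hge) => z /=; have := h0b z; lra.
exists (sup L); split => [x a t Gx dx|y b t Gy dy].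
  by apply: sup_upper_bound => //; exists x, a, t.
by apply: ge_sup; [case: supL|apply: ub Gy dy].
Qed.

Context {c : R}.
Hypothesis c_lb : forall x a t, Gr (x, a) -> dominated t (fun z => x z - h0 z) -> a - t <= c.
Hypothesis c_ub : forall y b t, Gr (y, b) -> dominated t (fun z => y z + h0 z) -> c <= t - b.

Definition extension := [set p | exists x a l,
  Gr (x, a) /\ p = ((fun z => x z + l * h0 z), a + l * c)].

Lemma extension_sub : Gr `<=` extension.
Proof.
move=> [x a] Gx; exists x, a, 0; split => //.
by congr pair; [apply/funext => z|]; rewrite mul0r addr0.
Qed.

Lemma extension_h0 : extension (h0, c).
Proof.
exists (cst 0), 0, 1; split => //.
by congr pair; [apply/funext => z|]; rewrite mul1r add0r.
Qed.

(* Divide by [|l|] and use the bound on [c] from the side given by the sign of [l]. *)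
Lemma extension_le x a t : extension (x, a) -> dominated t x -> a <= t.
Proof.
case: GrD => _ GrL _ GrLe; move=> [y [b [l [Gy [-> ->]]]]] dt.
have [lneg|lpos|l0] := ltgtP l 0.
- have il : 0 <= - l^-1 by rewrite oppr_ge0 invr_le0 ltW.
  have dl : dominated (- l^-1 * t) (fun z => (- l^-1 * y z + 0 * y z) - h0 z).
    by apply: dominated_ext (dominated_scale Hge HG il dt) _ => z /=; field; rewrite lt_eqF.
  have nl : 0 <= - l by rewrite oppr_ge0 ltW.
  have := ler_wpM2l nl (c_lb _ _ _ (GrL y y b b (- l^-1) 0 Gy Gy) dl).
  have -> : - l * (- l^-1 * b + 0 * b - - l^-1 * t) = b - t by field; rewrite lt_eqF.
  lra.
- have il : 0 <= l^-1 by rewrite invr_ge0 ltW.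
  have dl : dominated (l^-1 * t) (fun z => (l^-1 * y z + 0 * y z) + h0 z).
    by apply: dominated_ext (dominated_scale Hge HG il dt) _ => z /=; field; rewrite gt_eqF.
  have := ler_wpM2l (ltW lpos) (c_ub _ _ _ (GrL y y b b l^-1 0 Gy Gy) dl).
  have -> : l * (l^-1 * t - (l^-1 * b + 0 * b)) = t - b by field; rewrite gt_eqF.
  lra.
- rewrite l0 in dt *; rewrite mul0r addr0; apply: GrLe Gy _.
  by apply: dominated_ext dt _ => z; rewrite mul0r addr0.
Qed.

Hypothesis h0_new : ~ exists a, Gr (h0, a).

(* Two representations with different coefficients [l != l'] of [h0] would put
   [h0] in the domain of [Gr]. *)
Lemma extension_functional x a b : extension (x, a) -> extension (x, b) -> a = b.
Proof.
case: GrD => GrF GrL _ _.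
move=> [y [a' [l [Gy [ex ->]]]]] [y' [b' [l' [Gy' [ex' ->]]]]].
have eyz z : y z + l * h0 z = y' z + l' * h0 z.
  by have := congr1 (fun k => k z) (etrans (esym ex) ex').
have [ll|nl] := eqVneq l l'.
  rewrite -ll in eyz *; have yy : y = y' by apply/funext => z; have := eyz z; lra.
  by rewrite -yy in Gy'; rewrite (GrF _ _ _ Gy Gy').
exfalso; apply: h0_new; exists ((l - l')^-1 * b' + - (l - l')^-1 * a').
have -> : h0 = (fun z => (l - l')^-1 * y' z + - (l - l')^-1 * y z).
  apply/funext => z; have e : y' z = y z + (l - l') * h0 z by have := eyz z; lra.
  by rewrite e; field; rewrite subr_eq0.
by apply: GrL.
Qed.

Lemma extension_graph : dominated_graph extension.
Proof.
case: GrD => _ GrL GrB _; split.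
- exact: extension_functional.
- move=> x y a b al be [u [a' [l [Gu [-> ->]]]]] [v [b' [k [Gv [-> ->]]]]].
  exists (fun z => al * u z + be * v z), (al * a' + be * b'), (al * l + be * k).
  by split; [exact: GrL|congr pair; [apply/funext => z|]; ring].
- move=> x a [u [a' [l [Gu [-> _]]]]].
  apply: is_bounded_ext (is_bounded_comb 1 l (GrB _ _ Gu) (ex_intro _ M h0M)) _ => z.
  by rewrite mul1r.
- exact: extension_le.
Qed.

End OneStepExtension.

(* Hahn-Banach via Zorn: a maximal dominated graph is defined on all bounded functions. *)
Lemma exists_dominated_linear : exists phi : (Omega -> R) -> R,
  (forall x y (al be : R), is_bounded x -> is_bounded y ->
     phi (fun z => al * x z + be * y z) = al * phi x + be * phi y) /\
  (forall h t, is_bounded h -> dominated t h -> phi h <= t).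
Proof.
have [Gr [GrD GrMax]] := Zorn_bigcup dominated_graph_bigcup.
have [GrF GrL GrB GrLe] := GrD.
(* Zero coefficients put [(0, 0)] in a nonempty graph, and the empty graph is
   not maximal. *)
have Gr0 : Gr (cst 0, 0).
  apply: contrapT => nG.
  have [[[x a] Gxa]|nE] := pselect (exists p, Gr p).
    apply: nG; have := GrL x x a a 0 0 Gxa Gxa; rewrite !mul0r addr0.
    by have -> : (fun z => 0 * x z + 0 * x z) = cst 0 by apply/funext => z; rewrite !mul0r addr0.
  apply: (GrMax [set (cst 0, 0)]) dominated_graph0; split.
    by move=> p Gp; exfalso; apply: nE; exists p.
  by move=> H; apply: nG; apply: H.
have total h : is_bounded h -> exists a, Gr (h, a).
  move=> [M hM]; apply: contrapT => nh.
  have [c [c_lb c_ub]] := extension_gap GrD Gr0 hM.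
  apply: GrMax (extension_graph GrD hM c_lb c_ub nh); split.
    exact: extension_sub.
  by move=> sub; apply: nh; exists c; apply: sub; exact: extension_h0.
pose phi h := xget 0 [set a | Gr (h, a)].
have phiP h : is_bounded h -> Gr (h, phi h) by move/total; exact: xgetPex.
exists phi; split => [x y al be bx b_y|h t bh dh]; last exact: GrLe _ _ _ (phiP h bh) dh.
exact: GrF _ _ _ (phiP _ (is_bounded_comb al be bx b_y))
  (GrL _ _ _ _ al be (phiP x bx) (phiP y b_y)).
Qed.

End HahnBanach.

Lemma simple_fun_sum_indic {R : realType} {Omega : Type} {f : Omega -> R} :
  simple_fun f -> exists n (a : 'I_n -> R) (A : 'I_n -> set Omega),
    forall x, f x = \sum_(i < n) a i * \1_(A i) x.
Proof.
move=> [s fs]; set s' := undup s.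
exists (size s'), (fun i => nth 0 s' i), (fun i => [set y | f y = nth 0 s' i]) => x.
pose F r := r * \1_([set y | f y = r]) x.
rewrite [RHS](_ : _ = \sum_(r <- s') F r); last by rewrite (big_nth 0) big_mkord.
rewrite (bigD1_seq (f x)) ?undup_uniq ?mem_undup //= big1.
  by rewrite addr0 /F indicE mem_set // mulr1.
by move=> r /eqP rf; rewrite /F indicE memNset ?mulr0 //= => e; apply: rf.
Qed.

Definition floor_step {R : realType} {Omega : Type} (d : R) (h : Omega -> R) x :=
  d * (Num.floor (h x / d))%:~R.

Section FloorStep.
Context {R : realType} {Omega : Type} {d : R} {h : Omega -> R}.
Hypothesis d0 : 0 < d.

Lemma floor_step_le x : floor_step d h x <= h x.
Proof.
by have := floor_le (h x / d); rewrite -(ler_pM2l d0) mulrCA mulfV ?gt_eqF // mulr1.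
Qed.

Lemma floor_step_gt x : h x - d < floor_step d h x.
Proof.
have := floorD1_gt (h x / d); rewrite -(ltr_pM2l d0) mulrCA mulfV ?gt_eqF // mulr1.
by rewrite intrD mulrDr mulr1 /floor_step; lra.
Qed.

Lemma floor_step_simple : is_bounded h -> simple_fun (floor_step d h).
Proof.
move=> [M hM]; set lo := Num.floor (- M / d); set hi := Num.floor (M / d).
exists [seq d * (lo + i%:Z)%:~R | i <- iota 0 (absz (hi - lo)).+1] => x.
have /andP[hlo hhi] : - M <= h x <= M by rewrite -ler_norml.
have l1 : lo <= Num.floor (h x / d) by apply: le_floor; rewrite ler_pM2r ?invr_gt0.
have l2 : Num.floor (h x / d) <= hi by apply: le_floor; rewrite ler_pM2r ?invr_gt0.
apply/mapP; exists (absz (Num.floor (h x / d) - lo)).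
  by rewrite mem_iota add0n ltnS; lia.
by rewrite /floor_step; congr (_ * _); congr intr; lia.
Qed.

End FloorStep.

Definition measure_of {R : realType} {Omega : Type} (phi : (Omega -> R) -> R)
  (A : set Omega) := phi \1_A.

Section Representation.
Context {R : realType} {Omega : Type} {ge : (Omega -> R) -> (Omega -> R) -> Prop}
  {G : set (Omega -> R)}.
Hypothesis Hge : regular_stochastic_order ge.
Context {phi : (Omega -> R) -> R}.
Hypothesis phi_lin : forall x y (al be : R), is_bounded x -> is_bounded y ->
  phi (fun z => al * x z + be * y z) = al * phi x + be * phi y.
Hypothesis phi_dom : forall h t, is_bounded h -> dominated ge G t h -> phi h <= t.
Local Notation m := (measure_of phi).

Lemma phiD {x y} : is_bounded x -> is_bounded y -> phi (fun z => x z + y z) = phi x + phi y.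
Proof.
move=> bx b_y; have := phi_lin _ _ 1 1 bx b_y; rewrite !mul1r => <-.
by congr phi; apply/funext => z; rewrite !mul1r.
Qed.

Lemma phiZ (a : R) {x} : is_bounded x -> phi (fun z => a * x z) = a * phi x.
Proof.
move=> bx; have := phi_lin _ _ a 0 bx bx; rewrite mul0r addr0 => <-.
by congr phi; apply/funext => z; rewrite mul0r addr0.
Qed.

Lemma phiB {x y} : is_bounded x -> is_bounded y -> phi (fun z => x z - y z) = phi x - phi y.
Proof.
move=> bx b_y; have := phi_lin _ _ 1 (-1) bx b_y; rewrite mul1r mulN1r => <-.
by congr phi; apply/funext => z; rewrite mul1r mulN1r.
Qed.

Lemma phi_ge0 {h} : is_bounded h -> (forall x, 0 <= h x) -> 0 <= phi h.
Proof.
move=> bh h0; rewrite -oppr_le0 -mulN1r -phiZ //.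
apply: phi_dom; first exact: is_boundedZ.
by apply: (dominated_le Hge) => x; rewrite mulN1r oppr_le0.
Qed.

Lemma phi_le {h1 h2} : is_bounded h1 -> is_bounded h2 -> (forall x, h1 x <= h2 x) ->
  phi h1 <= phi h2.
Proof.
move=> b1 b2 H; rewrite -subr_ge0 -phiB //; apply: phi_ge0; first exact: is_boundedB.
by move=> x; rewrite subr_ge0.
Qed.

Lemma phi_cst (c : R) : phi (fun _ => c) = c.
Proof.
have b1 : is_bounded (fun _ : Omega => (1 : R)) := is_bounded_cst 1.
have le1 : phi (fun _ => 1) <= 1 by apply: phi_dom => //; apply: (dominated_le Hge).
have geN1 : phi (fun _ => -1 * 1) <= -1.
  by apply: phi_dom; [exact: is_boundedZ|apply: (dominated_le Hge) => x; rewrite mulN1r].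
rewrite phiZ // in geN1; have phi1 : phi (fun _ => 1) = 1 by lra.
have -> : (fun _ : Omega => c) = (fun x => c * 1) by apply/funext => x; rewrite mulr1.
by rewrite (phiZ c b1) phi1 mulr1.
Qed.

Lemma measure_of_fa : fa_probability m.
Proof.
split.
- rewrite /measure_of -(phi_cst 1); congr phi; apply/funext => x.
  by rewrite indicE mem_set.
- by move=> A; apply: phi_ge0; [exact: is_bounded_indic|move=> x; rewrite indicE ler0n].
- move=> A B AB; rewrite /measure_of -phiD; [|exact: is_bounded_indic..].
  congr phi; apply/funext => x; rewrite !indicE in_setU.
  case: (boolP (x \in A)) => xA; case: (boolP (x \in B)) => xB //=; rewrite ?addr0 ?add0r //.
  have : (A `&` B) x by split; apply/set_mem.
  by rewrite AB.
Qed.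

Lemma measure_of_null N : ge (cst 0) \1_N -> m N = 0.
Proof.
move=> HN; apply/eqP; rewrite eq_le; apply/andP; split.
  apply: phi_dom; first exact: is_bounded_indic.
  by exists (cst 0); [right|apply: rso_ext HN _ _ => x //=; rewrite addr0].
by apply: phi_ge0; [exact: is_bounded_indic|move=> x; rewrite indicE ler0n].
Qed.

Lemma measure_of_P_order : P_order ge m.
Proof. by split; [exact: measure_of_fa|exact: measure_of_null]. Qed.

Lemma phi_sum_indic n (a : 'I_n -> R) (A : 'I_n -> set Omega) :
  phi (fun x => \sum_(i < n) a i * \1_(A i) x) = \sum_(i < n) a i * m (A i).
Proof.
elim: n a A => [|n IH] a A.
  rewrite big_ord0 -[RHS](phi_cst 0); congr phi; apply/funext => x; exact: big_ord0.
rewrite big_ord_recr /= -IH -phiZ; last exact: is_bounded_indic.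
rewrite -phiD; [|exact: is_bounded_sum_indic|exact/is_boundedZ/is_bounded_indic].
by congr phi; apply/funext => x; rewrite big_ord_recr.
Qed.

(* Rounding down to the grid [d Z] gives lower simple functions whose
   [phi]-values are within [d] of [phi h]. *)
Lemma bint_measure_of h : is_bounded h -> bint m h = phi h.
Proof.
move=> bh; change (sup (lower_sums m h) = phi h).
have ub : ubound (lower_sums m h) (phi h).
  move=> r [n [a [A [Hs ->]]]]; rewrite -phi_sum_indic.
  by apply: phi_le => //; apply: is_bounded_sum_indic.
have approx d : 0 < d -> exists2 r, lower_sums m h r & phi h - d <= r.
  move=> d0; have [n [a [A HA]]] := simple_fun_sum_indic (floor_step_simple d0 bh).
  have bd : is_bounded (floor_step d h).
    by apply: is_bounded_ext (is_bounded_sum_indic a A) _ => x; rewrite HA.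
  exists (phi (floor_step d h)).
    exists n, a, A; split; first by move=> x; rewrite -HA; apply: floor_step_le.
    by rewrite -phi_sum_indic; congr phi; apply/funext => x; rewrite HA.
  rewrite -[d in _ - d]phi_cst -phiB //; last exact: is_bounded_cst.
  by apply: phi_le => //; [exact/is_boundedB/is_bounded_cst|move=> x; apply/ltW/floor_step_gt].
have [r0 r0h _] := approx 1 ltr01.
apply/eqP; rewrite eq_le; apply/andP; split; first by apply: ge_sup => //; exists r0.
apply/ler_addgt0Pr => d d0; have [r hr hd] := approx d d0.
have : r <= sup (lower_sums m h) by apply: sup_upper_bound => //; split; [exists r|exists (phi h)].
lra.
Qed.

Lemma phi_eq0_null N h : m N = 0 -> is_bounded h -> (forall x, ~ N x -> h x = 0) ->
  phi h = 0.
Proof.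
move=> mN bh hN; have [M hM] := bh.
have bMN : is_bounded (fun x => M * \1_N x) by exact/is_boundedZ/is_bounded_indic.
have phiMN : phi (fun x => M * \1_N x) = 0.
  by rewrite phiZ; [rewrite [phi _]mN mulr0|exact: is_bounded_indic].
have hb x : - (M * \1_N x) <= h x <= M * \1_N x.
  rewrite indicE; case: (boolP (x \in N)) => [_|/negP xN] /=; rewrite ?mulr1 ?mulr0.
    by rewrite -ler_norml.
  by rewrite hN ?oppr0 ?lexx // => Nx; apply: xN; apply/mem_set.
apply/eqP; rewrite eq_le; apply/andP; split.
  by rewrite -phiMN; apply: phi_le => // x; case/andP: (hb x).
have := phiZ (-1) bMN; rewrite phiMN mulr0 => <-.
by apply: phi_le => //; [exact: is_boundedZ|move=> x; rewrite mulN1r; case/andP: (hb x)].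
Qed.

End Representation.

Lemma invSn_lt {R : realType} (x : R) (n : nat) : 0 < x -> x^-1 < n%:R -> n.+1%:R^-1 < x.
Proof.
move=> x0 h; have h1 : x^-1 < n.+1%:R by rewrite -natr1; lra.
by rewrite -[x in _ < x]invrK ltf_pV2 // posrE ?invr_gt0 ?ltr0Sn.
Qed.

Section Clipping.
Context {R : realType} {Omega : Type} {ge : (Omega -> R) -> (Omega -> R) -> Prop}
  {G : set (Omega -> R)}.
Hypothesis Hge : regular_stochastic_order ge.
Context {phi : (Omega -> R) -> R}.
Hypothesis phi_lin : forall x y (al be : R), is_bounded x -> is_bounded y ->
  phi (fun z => al * x z + be * y z) = al * phi x + be * phi y.
Hypothesis phi_dom : forall h t, is_bounded h -> dominated ge G t h -> phi h <= t.
Context {f : Omega -> R} {a : R}.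
Hypothesis Gf : G f.
Hypothesis fa : ge f (cst a).

Local Notation m := (measure_of phi).
Local Notation phi_le := (phi_le Hge phi_lin phi_dom).
Local Notation phi_cst := (phi_cst Hge phi_lin phi_dom).
Local Notation phiD := (phiD phi_lin).
Local Notation phiB := (phiB phi_lin).
Local Notation phiZ := (phiZ phi_lin).

Let mP : fa_probability m := measure_of_fa Hge phi_lin phi_dom.

Definition low := [set x | f x < a - 1].

Lemma measure_of_low : m low = 0.
Proof.
apply: (measure_of_null Hge phi_lin phi_dom).
exact: (rso_null_below Hge _ _ _ fa ltr01).
Qed.

Lemma not_low x : ~ low x -> a - 1 <= f x.
Proof. by move=> h; rewrite leNgt; apply/negP. Qed.

Definition clip (n : nat) x := Num.max (Num.min (f x) n%:R) (a - 1).

Lemma clip_lb n x : a - 1 <= clip n x.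
Proof. by rewrite /clip le_max lexx orbT. Qed.

Lemma clip_ub n x : clip n x <= n%:R + `|a - 1|.
Proof.
rewrite /clip ge_max; apply/andP; split.
  by rewrite ge_min; apply/orP; right; have := normr_ge0 (a - 1); lra.
by have := ler_norm (a - 1); have := ler0n R n; lra.
Qed.

Lemma is_bounded_clip n : is_bounded (clip n).
Proof. by apply: (is_bounded_between (a - 1) (n%:R + `|a - 1|)) => x; rewrite clip_lb clip_ub. Qed.

Lemma clip_homo n k x : (n <= k)%N -> clip n x <= clip k x.
Proof.
move=> nk; rewrite /clip ge_max; apply/andP; split; last by rewrite le_max lexx orbT.
by rewrite le_max; apply/orP; left; rewrite le_min ge_min lexx /= ge_min ler_nat nk orbT.
Qed.

(* Off [low], [clip n <= f]; on [low], [f - clip n = f - (a - 1)] is bounded below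
   by [(f - a) 1_low], which is [>= 0] for the order. *)
Lemma rso_clip n : ge f (clip n).
Proof.
apply: (rso_from_sub0 Hge).
have H1 := rso_rest Hge low (rso_sub0 Hge fa).
have H2 : ge (fun x => (f x - clip n x) - (f x - a) * \1_low x) (cst 0).
  apply: (rso_cert Hge) => x; rewrite indicE; case: (boolP (x \in low)) => xN /=.
    have fx : f x < a - 1 by move: xN; rewrite inE.
    rewrite /clip mulr1 (max_r (_ : Num.min (f x) n%:R <= a - 1)); first lra.
    by rewrite ge_min (ltW fx).
  rewrite mulr0 subr0 subr_ge0 /clip ge_max ge_min lexx /=.
  by apply: not_low => lx; move/negP: xN; apply; apply/mem_set.
by apply: rso_ext (rso_add Hge H1 H2) _ _ => x //=; rewrite /GRing.mul /=; lra.
Qed.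

Lemma phi_clip_le0 n : phi (clip n) <= 0.
Proof.
apply: phi_dom; first exact: is_bounded_clip.
by exists f; [left|apply: rso_ext (rso_clip n) _ _ => x //=; rewrite add0r].
Qed.

Lemma phi_clip_lb n : a - 1 <= phi (clip n).
Proof.
rewrite -(phi_cst (a - 1)); apply: phi_le; [exact: is_bounded_cst|exact: is_bounded_clip|].
exact: clip_lb.
Qed.

Lemma phi_clip_homo : {homo (fun n => phi (clip n)) : n k / (n <= k)%N >-> n <= k}.
Proof.
move=> n k nk; apply: phi_le => [||x]; [exact: is_bounded_clip..|].
exact: clip_homo.
Qed.

Lemma truncate_clip n x : `|a| + 1 <= n%:R -> ~ low x -> truncate n%:R (f x) = clip n x.
Proof.
move=> hn /not_low fx; have ha := ler_norm a; have := ler_norm (- a); rewrite normrN => ha'.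
rewrite truncate_min; [|exact: ler0n|lra].
by rewrite /clip max_l // le_min; apply/andP; split; lra.
Qed.

Lemma is_bounded_truncate n : is_bounded (fun x => truncate n%:R (f x)).
Proof.
by apply: (is_bounded_between (- n%:R) n%:R) => x; rewrite truncate_lb ?truncate_ub ?ler0n.
Qed.

Lemma bint_truncate_clip n : `|a| + 1 <= n%:R ->
  bint m (fun x => truncate n%:R (f x)) = phi (clip n).
Proof.
move=> hn; rewrite (bint_measure_of Hge phi_lin phi_dom _ (is_bounded_truncate n)).
have bd := is_boundedB (is_bounded_truncate n) (is_bounded_clip n).
have e0 : phi (fun x => truncate n%:R (f x) - clip n x) = 0.
  apply: (phi_eq0_null Hge phi_lin phi_dom _ _ measure_of_low bd) => x xN.
  by rewrite truncate_clip //; lra.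
have := phiD (is_bounded_clip n) bd; rewrite e0 addr0 => <-.
by congr phi; apply/funext => x; lra.
Qed.

Lemma fa_integral_le0 : (fa_integral m f <= 0)%E.
Proof.
set n0 := (Num.truncn (`|a| + 1)).+1; have hn0 : `|a| + 1 < n0%:R := truncnS_gt _.
set v := fun n => phi (clip n); set l := sup (range v).
have vub : has_ubound (range v) by exists 0 => _ [n _ <-]; exact: phi_clip_le0.
have l0 : l <= 0.
  by apply: ge_sup; [exists (v 0%N), 0%N|move=> _ [n _ <-]; exact: phi_clip_le0].
have lim_v : (fun n => (v n)%:E) @ \oo --> l%:E.
  by apply: cvg_EFin; [near=> n|exact: nondecreasing_cvgn phi_clip_homo vub].
have lim_trunc : (fun n : nat => (bint m (fun x => truncate n%:R (f x)))%:E) @ \oo --> l%:E.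
  apply: cvg_trans lim_v; apply: near_eq_cvg; exists n0 => // n /= hn.
  by rewrite bint_truncate_clip //; apply/ltW/(lt_le_trans hn0); rewrite ler_nat.
rewrite /fa_integral /= asboolT; last exact: cvgP lim_trunc.
by rewrite (cvg_lim (@ereal_hausdorff R) lim_trunc) lee_fin.
Unshelve. all: by end_near.
Qed.

Definition step (n : nat) := floor_step (n.+1%:R^-1) (clip n).

Lemma invS_gt0 (n : nat) : 0 < (n.+1%:R : R)^-1.
Proof. by rewrite invr_gt0 ltr0Sn. Qed.

Lemma step_le n x : step n x <= clip n x.
Proof. exact: floor_step_le (invS_gt0 n) x. Qed.

Lemma step_gt n x : clip n x - n.+1%:R^-1 < step n x.
Proof. exact: floor_step_gt (invS_gt0 n) x. Qed.

Lemma is_bounded_step n : is_bounded (step n).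
Proof.
apply: (is_bounded_between (a - 1 - n.+1%:R^-1) (n%:R + `|a - 1|)) => x.
have := step_le n x; have := step_gt n x; have := clip_lb n x; have := clip_ub n x.
by move: (n.+1%:R^-1) => d h1 h2 h3 h4; apply/andP; split; lra.
Qed.

Lemma step_close n x : `|a| + 1 <= n%:R -> ~ low x -> f x <= n%:R ->
  `|step n x - f x| <= n.+1%:R^-1.
Proof.
move=> hn /not_low fx fn; have ef : clip n x = f x by rewrite /clip min_l // max_l.
have := step_le n x; have := step_gt n x; rewrite ef; have := invS_gt0 n.
by move: (n.+1%:R^-1) => d h1 h2 h3; rewrite ler_norml; apply/andP; split; lra.
Qed.

(* Markov's inequality for [clip n - (a - 1) >= 0], whose [phi]-value is at most [1 - a]. *)
Lemma measure_of_gt {n} : `|a| + 1 <= n%:R ->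
  (n%:R - a + 1) * m [set x | n%:R < f x] <= 1 - a.
Proof.
move=> hn; set P := [set x | n%:R < f x].
have ha := ler_norm a; have := ler_norm (- a); rewrite normrN => ha'.
have bd := is_boundedB (is_bounded_clip n) (is_bounded_cst (a - 1)).
rewrite -phiZ; last exact: is_bounded_indic.
apply: (@le_trans _ _ (phi (fun x => clip n x - (a - 1)))).
  apply: phi_le => //; first exact/is_boundedZ/is_bounded_indic.
  move=> x; rewrite indicE; case: (boolP (x \in P)) => [|_] /=.
    rewrite inE /= => fx; rewrite mulr1 /clip min_r ?(ltW fx) // max_l; lra.
  by rewrite mulr0 subr_ge0 clip_lb.
have := phiB (is_bounded_clip n) (is_bounded_cst (a - 1)); rewrite phi_cst => ->.
by have := phi_clip_le0 n; lra.
Qed.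

Lemma a_le1 : a <= 1.
Proof. by have := phi_clip_lb 0; have := phi_clip_le0 0; lra. Qed.

Lemma measure_of_step_far {n eps} : `|a| + 1 <= n%:R -> n.+1%:R^-1 < eps ->
  m [set x | eps < `|step n x - f x|] <= m [set x | n%:R < f x].
Proof.
move=> hn hd; set P := [set x | n%:R < f x].
have far : [set x | eps < `|step n x - f x|] `<=` low `|` P.
  move=> x far_x; case: (pselect (low x)) => xN; [by left|right].
  rewrite /P /= ltNge; apply/negP => fn.
  by have := lt_le_trans far_x (le_trans (step_close n x hn xN fn) (ltW hd)); rewrite ltxx.
apply: le_trans (fa_le mP _ _ far) _.
by have := fa_subadd mP low P; rewrite measure_of_low add0r.
Qed.

Lemma step_cvg_in_measure eps : 0 < eps ->
  (fun n => m [set x | eps < `|step n x - f x|]) @ \oo --> (0 : R).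
Proof.
move=> e0; apply/cvgrPdist_le => e e1.
exists (Num.truncn (`|a| + 1 + eps^-1 + (1 - a) / e)).+1 => // n /= hN.
have hn : `|a| + 1 + eps^-1 + (1 - a) / e < n%:R.
  by apply: lt_le_trans (truncnS_gt _) _; rewrite ler_nat.
have ie : 0 < eps^-1 by rewrite invr_gt0.
have ie' : 0 <= (1 - a) / e by rewrite divr_ge0 //; have := a_le1; lra.
have hn1 : `|a| + 1 <= n%:R by lra.
have hd : n.+1%:R^-1 < eps by apply: invSn_lt => //; have := normr_ge0 a; lra.
have far := measure_of_step_far hn1 hd; have gt := measure_of_gt hn1.
rewrite sub0r normrN ger0_norm ?fa_ge0 //; apply: le_trans far _.
have ha := ler_norm a; set c := n%:R - a + 1 in gt.
have cpos : 0 < c by rewrite /c; lra.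
have : (1 - a) / c <= e.
  by rewrite ler_pdivrMr // mulrC -ler_pdivrMr //; apply: ltW; rewrite /c; lra.
have : m [set x | n%:R < f x] <= (1 - a) / c by rewrite ler_pdivlMr // mulrC.
lra.
Qed.

Lemma step_dist_le {N n k} : (N <= n)%N -> (N <= k)%N -> forall x,
  `|step n x - step k x|
    <= n.+1%:R^-1 + k.+1%:R^-1 + ((clip n x - clip N x) + (clip k x - clip N x)).
Proof.
move=> hn hk x; have := clip_homo _ _ x hn; have := clip_homo _ _ x hk.
have := step_le n x; have := step_gt n x; have := step_le k x; have := step_gt k x.
move: (n.+1%:R^-1) (k.+1%:R^-1) => dn dk h1 h2 h3 h4 h5 h6.
by rewrite ler_norml; apply/andP; split; lra.
Qed.

(* The [phi (clip n)] increase to their supremum, so beyond some [N] they are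
   [eps/4]-close to it, and [step_dist_le] turns this into an [L^1] bound. *)
Lemma step_cauchy eps : 0 < eps -> exists N : nat, forall n k : nat,
  (N <= n)%N -> (N <= k)%N -> bint m (fun x => `|step n x - step k x|) <= eps.
Proof.
move=> e0; set v := fun n => phi (clip n); set l := sup (range v).
have hsup : has_sup (range v).
  by split; [exists (v 0%N), 0%N|exists 0 => _ [n _ <-]; exact: phi_clip_le0].
have e4 : 0 < eps / 4 by rewrite divr_gt0.
have [_ [N1 _ <-] hN1] := sup_adherent e4 hsup.
exists (maxn N1 (Num.truncn (eps / 4)^-1).+1) => n k hn hk.
set N := maxn _ _ in hn hk.
have vl j : v j <= l by apply: sup_upper_bound => //; exists j.
have vN : v N1 <= v N by apply: phi_clip_homo; rewrite leq_maxl.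
have dlt j : (N <= j)%N -> j.+1%:R^-1 < eps / 4.
  move=> hj; apply: invSn_lt => //; apply: lt_le_trans (truncnS_gt _) _.
  by rewrite ler_nat; apply: leq_trans hj; rewrite leq_maxr.
have bsub j : is_bounded (fun x => clip j x - clip N x).
  exact: is_boundedB (is_bounded_clip j) (is_bounded_clip N).
have bdist := is_bounded_norm (is_boundedB (is_bounded_step n) (is_bounded_step k)).
have bbound := is_boundedD (is_bounded_cst (n.+1%:R^-1 + k.+1%:R^-1))
  (is_boundedD (bsub n) (bsub k)).
rewrite (bint_measure_of Hge phi_lin phi_dom _ bdist).
apply: le_trans (phi_le bdist bbound (step_dist_le hn hk)) _.
rewrite (phiD (is_bounded_cst _) (is_boundedD (bsub n) (bsub k))) phi_cst.
rewrite (phiD (bsub n) (bsub k)) !(phiB (is_bounded_clip _) (is_bounded_clip N)).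
have := dlt n hn; have := dlt k hk; have := vl n; have := vl k.
rewrite -/l -/(v n) -/(v k) -/(v N) in hN1 vN *.
by move: (n.+1%:R^-1) (k.+1%:R^-1) => dn dk; lra.
Qed.

Lemma Gamma_DS_integrable : DS_integrable m f.
Proof.
exists step; split; [move=> n|exact: step_cvg_in_measure|exact: step_cauchy].
exact: floor_step_simple (invS_gt0 n) (is_bounded_clip n).
Qed.

End Clipping.

Theorem theorem8 (R : realType) (Omega : Type) (w : Omega)
  (ge : (Omega -> R) -> (Omega -> R) -> Prop) (G : set (Omega -> R)) :
  regular_stochastic_order ge -> convex_cone G ->
  ((~ exists f, G f /\ ge f (cst 1)) <->
   exists m : set Omega -> R, P_order ge m /\
     (Gamma_order ge G `<=` DS_integrable m) /\
     (ereal_sup [set fa_integral m f | f in Gamma_order ge G] <= 0)%E).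
Proof.
move=> Hge HG; split => [Hno|[m [Pm [_ Hsup]]] [f [Gf f1]]].
  have [phi [phi_lin phi_dom]] := exists_dominated_linear Hge HG Hno.
  exists (measure_of phi); split; first exact: (measure_of_P_order Hge phi_lin phi_dom).
  split => [f [Gf [a fa]]|].
    exact: (Gamma_DS_integrable Hge phi_lin phi_dom Gf fa).
  apply: ge_ereal_sup => _ [f [Gf [a fa]] <-].
  exact: (fa_integral_le0 Hge phi_lin phi_dom Gf fa).
have inS : [set fa_integral m g | g in Gamma_order ge G] (fa_integral m f).
  by exists f => //; split => //; exists 1.
have := le_trans (fa_integral_ge_half Hge Pm f1) (le_trans (ereal_sup_ubound inS) Hsup).
by rewrite lee_fin; lra.
Qed.
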